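(* For any $q\ge1$, let $u_{n,q}$ (resp. $v_{n,q}$) be the total number of occurrences of the letter $1$ in all words of $\mathcal{W}^q_n$ (resp. of $\mathcal{B}_n(1^{q+1})$). Then $$\lim_{n\to\infty}\frac{u_{n,q}-v_{n,q}}{n\cdot f_{n+q+1,q+1}}=0.$$
   Context: For $q\ge1$, a binary word is $q$-decreasing if for every maximal run of $0$s, of length $a>0$, together with the (possibly empty) maximal run of $1$s immediately following it, of length $b$, one has $q\cdot a>b$; $\mathcal{W}^q_n$ is the set of $q$-decreasing words of length $n$. $\mathcal{B}_n(1^{q+1})$ is the set of binary words of length $n$ with no factor $1^{q+1}$. The $k$-generalized Fibonacci numbers are $f_{n,k}=0$ for $0\le n\le k-2$, $f_{k-1,k}=1$, and $f_{n,k}=\sum_{i=1}^kf_{n-i,k}$ for $n\ge k$. *)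

(* Binary words: false = letter 0, true = letter 1. *)
From mathcomp Require Import all_boot all_order all_algebra.
From mathcomp Require Import all_classical all_reals all_analysis.
Set Implicit Arguments. Unset Strict Implicit. Unset Printing Implicit Defensive.

Definition zrun (w : seq bool) (i : nat) : nat := find id (drop i w).
Definition orun (w : seq bool) (i : nat) : nat :=
  find negb (drop (zrun w i) (drop i w)).

Definition zrun_start (w : seq bool) (i : nat) : bool :=
  (i < size w) && (nth true w i == false) && ((i == 0) || nth false w i.-1).

Definition qdecreasing (q : nat) (w : seq bool) : bool :=
  all (fun i => zrun_start w i ==> (orun w i < q * zrun w i)) (iota 0 (size w)).

Definition avoids_ones (q : nat) (w : seq bool) : bool :=
  ~~ infix (nseq q.+1 true) w.

Definition u_count (q n : nat) : nat :=
  \sum_(w : n.-tuple bool | qdecreasing q w) count id w.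
Definition v_count (q n : nat) : nat :=
  \sum_(w : n.-tuple bool | avoids_ones q w) count id w.

Definition kfib_next (k : nat) (s : seq nat) : nat :=
  let n := size s in
  if n < k.-1 then 0 else if n == k.-1 then 1 else sumn (drop (n - k) s).
Fixpoint kfib_list (k n : nat) : seq nat :=
  match n with
  | 0 => [:: kfib_next k [::]]
  | n'.+1 => let s := kfib_list k n' in rcons s (kfib_next k s)
  end.
Definition kfib (k n : nat) : nat := nth 0 (kfib_list k n) n.

From mathcomp Require Import all_boot all_order all_algebra.
From mathcomp Require Import all_classical all_reals all_analysis.
From mathcomp Require Import zify.
Import Order.TTheory GRing.Theory Num.Theory numFieldNormedType.Exports.
Set Implicit Arguments. Unset Strict Implicit. Unset Printing Implicit Defensive.

(* Both families are read through the run-length encoding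
   [w = 1^s 0 1^c1 0 1^c2 ... 0 1^ck].  A length-preserving bijection from
   W^q_n onto B_n(1^(q+1)) rewrites a block [0 1^c] with [c = q m + r] that is
   preceded by at least [m] empty blocks [0] (this is exactly q-decreasingness)
   as [0 1^r] followed by [m] blocks [0 1^q], using up [m] of the empty blocks;
   it rewrites the leading [1^s] with [s = (q+1) t + r] as [1^r] followed by
   [t] blocks [0 1^q].  Only the latter changes the number of 1s, by [t], so
   [0 <= u_n - v_n <= L_n], the total number of leading 1s in W^q_n.  Since
   [L_(n+1) = L_n + #|W^q_n| = L_n + f_(n+q+1,q+1)], we get
   [L_n <= f_(n+q+2) <= 2 f_(n+q+1)], and the quotient is O(1/n). *)

Lemma cat_nseq_cons (T : Type) n (x : T) s : nseq n x ++ x :: s = x :: nseq n x ++ s.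
Proof. by elim: n => [|n IH] //=; rewrite IH. Qed.

Lemma all_iota0S (P : pred nat) n :
  all P (iota 0 n.+1) = P 0 && all (fun i => P i.+1) (iota 0 n).
Proof. by rewrite /= -add1n iotaDl all_map. Qed.

Lemma prefix_nseq_true m w : prefix (nseq m true) w = (m <= find negb w).
Proof. by elim: m w => [|m IH] [|[] w] //=; rewrite IH. Qed.

Lemma divn_small_addM d x m : x < d -> (x + d * m) %/ d = m.
Proof.
by move=> xd; rewrite addnC mulnC divnMDl ?divn_small ?addn0 // (leq_trans _ xd).
Qed.

Lemma modn_small_addM d x m : x < d -> (x + d * m) %% d = x.
Proof. by move=> xd; rewrite addnC mulnC modnMDl modn_small. Qed.

Definition blocks_word (cs : seq nat) : seq bool :=
  flatten [seq false :: nseq c true | c <- cs].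

Definition word_of_runs (p : nat * seq nat) : seq bool :=
  nseq p.1 true ++ blocks_word p.2.

Fixpoint runs_of_word (w : seq bool) : nat * seq nat :=
  match w with
  | [::] => (0, [::])
  | true :: w' => ((runs_of_word w').1.+1, (runs_of_word w').2)
  | false :: w' => (0, (runs_of_word w').1 :: (runs_of_word w').2)
  end.

Lemma blocks_word_cons c cs :
  blocks_word (c :: cs) = false :: nseq c true ++ blocks_word cs.
Proof. by []. Qed.

Lemma runs_of_wordK : cancel runs_of_word word_of_runs.
Proof.
by elim=> [|[] w IH] //=; rewrite -[in RHS]IH /word_of_runs //= blocks_word_cons.
Qed.

Lemma word_of_runsK : cancel word_of_runs runs_of_word.
Proof.
case=> s cs; rewrite /word_of_runs /=.
by elim: cs s => [|c cs IHcs] s; elim: s => [|s IHs] //=; rewrite ?IHs ?IHcs.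
Qed.

Lemma size_blocks_word cs : size (blocks_word cs) = size cs + sumn cs.
Proof.
by elim: cs => [|c cs IH] //; rewrite blocks_word_cons /= size_cat size_nseq IH; lia.
Qed.

Lemma count_blocks_word cs : count id (blocks_word cs) = sumn cs.
Proof.
by elim: cs => [|c cs IH] //; rewrite blocks_word_cons /= count_cat count_nseq IH; lia.
Qed.

Lemma size_word_of_runs p : size (word_of_runs p) = p.1 + size p.2 + sumn p.2.
Proof. by rewrite size_cat size_nseq size_blocks_word addnA. Qed.

Lemma count_word_of_runs p : count id (word_of_runs p) = p.1 + sumn p.2.
Proof. by rewrite count_cat count_nseq mul1n count_blocks_word. Qed.

Section QDecreasing.
Variable q : nat.

Definition run_ok (w : seq bool) (i : nat) : bool :=
  zrun_start w i ==> (orun w i < q * zrun w i).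

Definition later_runs_ok (w : seq bool) : bool :=
  all (fun i => (i != 0) ==> run_ok w i) (iota 0 (size w)).

Lemma run_ok_cons x w i :
  run_ok (x :: w) i.+1 = if i is 0 then x ==> run_ok w 0 else run_ok w i.
Proof.
rewrite /run_ok /zrun_start /orun /zrun /=.
by case: i => [|i] //=; case: x; rewrite ?andbT ?andbF.
Qed.

Lemma qdecreasingE w : qdecreasing q w = all (run_ok w) (iota 0 (size w)).
Proof. by []. Qed.

Lemma qdecreasing_true w : qdecreasing q (true :: w) = qdecreasing q w.
Proof.
rewrite !qdecreasingE [size _]/= all_iota0S {1}/run_ok /zrun_start /=.
by apply: eq_all => -[|i]; rewrite run_ok_cons.
Qed.

Lemma qdecreasing_false w : qdecreasing q (false :: w) =
  (find negb (drop (find id w) w) < q * (find id w).+1) && later_runs_ok w.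
Proof.
rewrite qdecreasingE [size _]/= all_iota0S {1}/run_ok /zrun_start /orun /zrun /=.
by congr andb; apply: eq_all => -[|i]; rewrite run_ok_cons.
Qed.

Lemma later_runs_ok_cons x w :
  later_runs_ok (x :: w) = if x then qdecreasing q w else later_runs_ok w.
Proof.
rewrite /later_runs_ok [size _]/= all_iota0S /=.
by case: x; [rewrite qdecreasingE|]; apply: eq_all => -[|i]; rewrite run_ok_cons.
Qed.

Lemma qdecreasing_ones k w : qdecreasing q (nseq k true ++ w) = qdecreasing q w.
Proof. by elim: k => [|k IH] //=; rewrite qdecreasing_true. Qed.

Lemma later_runs_ok_zeros k w :
  later_runs_ok (nseq k false ++ w) = later_runs_ok w.
Proof. by elim: k => [|k IH] //=; rewrite later_runs_ok_cons. Qed.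

Lemma qdecreasing_block a b cs :
  qdecreasing q (false :: nseq a false ++ nseq b.+1 true ++ blocks_word cs) =
  (b.+1 < q * a.+1) && qdecreasing q (blocks_word cs).
Proof.
rewrite qdecreasing_false later_runs_ok_zeros later_runs_ok_cons qdecreasing_ones.
rewrite find_cat has_nseq andbF size_nseq /= addn0 drop_size_cat ?size_nseq //=.
by rewrite find_cat has_nseq andbF size_nseq; case: cs => [|c cs]; rewrite ?addn0.
Qed.

(* [z] counts the empty blocks just before [cs]: a block [c > 0] ends a 0-run
   of length [z.+1], and [c < q * z.+1] iff [c %/ q <= z]. *)
Fixpoint qdec_blocks (z : nat) (cs : seq nat) : bool :=
  match cs with
  | [::] => true
  | c :: cs' =>
      if c == 0 then qdec_blocks z.+1 cs' else (c %/ q <= z) && qdec_blocks 0 cs'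
  end.

Lemma qdec_blocks_zeros z j cs :
  qdec_blocks z (nseq j 0 ++ cs) = qdec_blocks (z + j) cs.
Proof. by elim: j z => [|j IH] z /=; rewrite ?addn0 // IH addnS. Qed.

Hypothesis q_gt0 : 0 < q.

Lemma qdecreasing_zeros_blocks z cs :
  qdecreasing q (nseq z false ++ blocks_word cs) = qdec_blocks z cs.
Proof.
elim: cs z => [|c cs IH] z.
  rewrite cats0; case: z => [|z] //.
  rewrite /= qdecreasing_false find_nseq /= mul1n -{1}(size_nseq z false) drop_size.
  by rewrite -[nseq z false]cats0 later_runs_ok_zeros muln_gt0 q_gt0.
rewrite blocks_word_cons cat_nseq_cons /=; case: c => [|b] /=.
  by rewrite -(IH z.+1).
rewrite qdecreasing_block -(IH 0) /= -(ltnS (b.+1 %/ q) z) ltn_divLR //.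
by rewrite mulnC.
Qed.

Lemma qdecreasing_word_of_runs p :
  qdecreasing q (word_of_runs p) = qdec_blocks 0 p.2.
Proof. by rewrite qdecreasing_ones -(qdecreasing_zeros_blocks 0). Qed.

End QDecreasing.

Section AvoidsOnes.
Variable q : nat.

Lemma avoids_ones_cons x w :
  avoids_ones q (x :: w) = (find negb (x :: w) <= q) && avoids_ones q w.
Proof. by rewrite /avoids_ones infix_consl negb_or prefix_nseq_true -ltnNge ltnS. Qed.

Lemma avoids_ones_find w : avoids_ones q w -> find negb w <= q.
Proof. by case: w => [|x w] //; rewrite avoids_ones_cons => /andP[]. Qed.

Lemma avoids_ones_ones k w :
  avoids_ones q (nseq k true ++ w) = (k + find negb w <= q) && avoids_ones q w.
Proof.
elim: k => [|k IH].
  by rewrite andb_idl //; apply: avoids_ones_find.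
rewrite [_ ++ _]/= avoids_ones_cons IH /= find_cat has_nseq andbF size_nseq andbA.
by congr andb; rewrite andb_idr // => /ltnW.
Qed.

Lemma avoids_ones_word_of_runs p :
  avoids_ones q (word_of_runs p) = (p.1 <= q) && all (fun c => c <= q) p.2.
Proof.
case: p => s cs; rewrite /word_of_runs /=.
elim: cs s => [|c cs IH] s; rewrite avoids_ones_ones ?addn0 //.
by rewrite blocks_word_cons avoids_ones_cons /= IH.
Qed.

End AvoidsOnes.

Section BlockBijection.
Variable q : nat.

Fixpoint split_blocks (z : nat) (cs : seq nat) : seq nat :=
  match cs with
  | [::] => nseq z 0
  | c :: cs' =>
      if c == 0 then split_blocks z.+1 cs'
      else nseq (z - c %/ q) 0 ++ c %% q :: nseq (c %/ q) q ++ split_blocks 0 cs'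
  end.

(* The second component counts the leading blocks [q], which have no block
   [< q] in front of them to merge into. *)
Fixpoint merge_blocks (xs : seq nat) : seq nat * nat :=
  match xs with
  | [::] => ([::], 0)
  | x :: xs' =>
      let: (ys, m) := merge_blocks xs' in
      if x == q then (ys, m.+1) else (nseq m 0 ++ x + q * m :: ys, 0)
  end.

Lemma split_blocks_zeros z j cs :
  split_blocks z (nseq j 0 ++ cs) = split_blocks (z + j) cs.
Proof. by elim: j z => [|j IH] z /=; rewrite ?addn0 // IH addnS. Qed.

Lemma merge_blocks_cat xs ys : (merge_blocks ys).2 = 0 ->
  merge_blocks (xs ++ ys) =
  ((merge_blocks xs).1 ++ (merge_blocks ys).1, (merge_blocks xs).2).
Proof.
move=> ys0; elim: xs => [|x xs IH] /=.
  by case: (merge_blocks ys) ys0 => ? ? /= ->.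
by rewrite IH; case: (merge_blocks xs) => zs m; case: eqP; rewrite //= -catA.
Qed.

Lemma merge_blocks_nseq j xs :
  merge_blocks (nseq j q ++ xs) = ((merge_blocks xs).1, (merge_blocks xs).2 + j).
Proof.
elim: j => [|j IH]; first by rewrite addn0; case: (merge_blocks xs).
by rewrite /= IH eqxx addnS.
Qed.

Lemma size_merge_blocks xs :
  size (merge_blocks xs).1 + (merge_blocks xs).2 = size xs.
Proof.
elim: xs => [|x xs] //=; case: (merge_blocks xs) => ys m /= IH.
by case: eqP => _ /=; rewrite ?size_cat ?size_nseq /=; lia.
Qed.

Lemma sumn_merge_blocks xs :
  sumn (merge_blocks xs).1 + q * (merge_blocks xs).2 = sumn xs.
Proof.
elim: xs => [|x xs] /=; first by rewrite muln0.
case: (merge_blocks xs) => ys m /= IH.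
by case: eqP => [->|_] /=; rewrite ?sumn_cat ?sumn_nseq /=; lia.
Qed.

Hypothesis q_gt0 : 0 < q.

Lemma all_split_blocks z cs : all (fun x => x <= q) (split_blocks z cs).
Proof.
elim: cs z => [|c cs IH] z /=; first by rewrite all_nseq leq0n orbT.
case: eqP => // _; rewrite all_cat all_nseq leq0n orbT /= all_cat all_nseq.
by rewrite ltnW ?ltn_pmod // leqnn orbT IH.
Qed.

Lemma merge_blocks_zeros z : merge_blocks (nseq z 0) = (nseq z 0, 0).
Proof. by elim: z => [|z IH] //=; rewrite IH eq_sym (gtn_eqF q_gt0) muln0. Qed.

Lemma merge_split_blocks z cs : qdec_blocks q z cs ->
  merge_blocks (split_blocks z cs) = (nseq z 0 ++ cs, 0).
Proof.
elim: cs z => [|c cs IH] z /=; first by rewrite merge_blocks_zeros cats0.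
case: eqP => [-> /IH -> /=|/eqP c0 /andP[cz /IH csE]]; first by rewrite cat_nseq_cons.
have merge_group : merge_blocks (c %% q :: nseq (c %/ q) q ++ split_blocks 0 cs) =
    (nseq (c %/ q) 0 ++ c :: cs, 0).
  rewrite /= merge_blocks_nseq csE /= ltn_eqF ?ltn_pmod //.
  by rewrite add0n addnC mulnC -divn_eq.
rewrite merge_blocks_cat merge_group // merge_blocks_zeros catA -nseqD.
by rewrite subnK.
Qed.

Lemma qdec_blocks_merge xs z : all (fun x => x <= q) xs ->
  qdec_blocks q z (merge_blocks xs).1.
Proof.
elim: xs z => [|x xs IH] z //= /andP[xq /IH {}IH].
case: (merge_blocks xs) IH => ys m /= IH; case: eqP => [_ //|/eqP xNq].
have {xq xNq} xq : x < q by rewrite ltn_neqAle xNq.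
rewrite qdec_blocks_zeros /=; case: eqP => [_|_]; first exact: IH.
by rewrite divn_small_addM // leq_addl IH.
Qed.

Lemma split_merge_blocks_zeros xs z : all (fun x => x <= q) xs ->
  split_blocks z (merge_blocks xs).1 = nseq z 0 ++ split_blocks 0 (merge_blocks xs).1.
Proof.
elim: xs z => [|x xs IH] z /=; first by rewrite cats0.
move=> /andP[xq /IH {}IH]; case: (merge_blocks xs) IH => ys m /= IH.
case: eqP => [_ //|/eqP xNq].
have {xq xNq} xq : x < q by rewrite ltn_neqAle xNq.
rewrite !split_blocks_zeros /= add0n; case: eqP => [/eqP|_].
  rewrite addn_eq0 muln_eq0 (gtn_eqF q_gt0) => /andP[_ /eqP ->].
  by rewrite addn0 IH [in RHS]IH cat_nseq_cons.
by rewrite divn_small_addM // modn_small_addM // addnK subnn.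
Qed.

Lemma merge_blocksK xs : all (fun x => x <= q) xs ->
  nseq (merge_blocks xs).2 q ++ split_blocks 0 (merge_blocks xs).1 = xs.
Proof.
elim: xs => [|x xs IH] //= /andP[xq xsq].
have shift z := split_merge_blocks_zeros z xsq.
move: (IH xsq) shift; case: (merge_blocks xs) => ys m /= {}IH shift.
case: eqP => [-> /=|/eqP xNq]; first by rewrite IH.
have {xq xNq} xq : x < q by rewrite ltn_neqAle xNq.
rewrite split_blocks_zeros /= add0n; case: eqP => [|_].
  move/eqP; rewrite addn_eq0 muln_eq0 (gtn_eqF q_gt0) => /andP[/eqP -> /eqP m0].
  by rewrite shift -IH m0.
by rewrite divn_small_addM // modn_small_addM // subnn IH.
Qed.

End BlockBijection.

Section WordBijection.
Variable q : nat.
Hypothesis q_gt0 : 0 < q.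

Definition avoiding_runs (p : nat * seq nat) : nat * seq nat :=
  (p.1 %% q.+1, nseq (p.1 %/ q.+1) q ++ split_blocks q 0 p.2).

Definition decreasing_runs (p : nat * seq nat) : nat * seq nat :=
  (p.1 + q.+1 * (merge_blocks q p.2).2, (merge_blocks q p.2).1).

Definition to_avoiding (w : seq bool) : seq bool :=
  word_of_runs (avoiding_runs (runs_of_word w)).

Definition to_decreasing (x : seq bool) : seq bool :=
  word_of_runs (decreasing_runs (runs_of_word x)).

Lemma avoiding_runsK p :
  qdec_blocks q 0 p.2 -> decreasing_runs (avoiding_runs p) = p.
Proof.
case: p => s cs /= qcs; rewrite /decreasing_runs /= merge_blocks_nseq.
by rewrite merge_split_blocks //= add0n mulnC addnC -divn_eq.
Qed.

Lemma decreasing_runsK p : p.1 <= q -> all (fun x => x <= q) p.2 ->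
  avoiding_runs (decreasing_runs p) = p.
Proof.
case: p => s xs /= sq xsq; rewrite /avoiding_runs /=.
by rewrite divn_small_addM // modn_small_addM // merge_blocksK.
Qed.

Lemma size_avoiding_runs p : qdec_blocks q 0 p.2 ->
  size (word_of_runs (avoiding_runs p)) = size (word_of_runs p).
Proof.
case: p => s cs /= qcs; rewrite !size_word_of_runs /= size_cat sumn_cat.
have := size_merge_blocks q (split_blocks q 0 cs).
have := sumn_merge_blocks q (split_blocks q 0 cs).
rewrite merge_split_blocks //= size_nseq sumn_nseq => sumE sizeE.
have := divn_eq s q.+1; rewrite mulnSr [q * _]mulnC; lia.
Qed.

Lemma count_avoiding_runs p : qdec_blocks q 0 p.2 ->
  count id (word_of_runs p) = count id (word_of_runs (avoiding_runs p)) + p.1 %/ q.+1.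
Proof.
case: p => s cs /= qcs; rewrite !count_word_of_runs /= sumn_cat.
have := sumn_merge_blocks q (split_blocks q 0 cs).
rewrite merge_split_blocks //= sumn_nseq => sumE.
have := divn_eq s q.+1; rewrite mulnSr [q * _]mulnC; lia.
Qed.

Lemma size_decreasing_runs p :
  size (word_of_runs (decreasing_runs p)) = size (word_of_runs p).
Proof.
case: p => s xs; rewrite !size_word_of_runs /=.
have := size_merge_blocks q xs; have := sumn_merge_blocks q xs; lia.
Qed.

Lemma to_avoiding_runs p :
  to_avoiding (word_of_runs p) = word_of_runs (avoiding_runs p).
Proof. by rewrite /to_avoiding word_of_runsK. Qed.

Lemma to_decreasing_runs p :
  to_decreasing (word_of_runs p) = word_of_runs (decreasing_runs p).
Proof. by rewrite /to_decreasing word_of_runsK. Qed.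

Lemma to_avoidingP w : qdecreasing q w ->
  [/\ avoids_ones q (to_avoiding w), size (to_avoiding w) = size w
    & to_decreasing (to_avoiding w) = w].
Proof.
rewrite -[w]runs_of_wordK; move: (runs_of_word w) => {w} p.
rewrite qdecreasing_word_of_runs // => qp.
rewrite to_avoiding_runs to_decreasing_runs avoiding_runsK // size_avoiding_runs //.
rewrite avoids_ones_word_of_runs /= -ltnS ltn_pmod //= all_cat all_nseq leqnn orbT.
by rewrite all_split_blocks.
Qed.

Lemma to_decreasingP x : avoids_ones q x ->
  [/\ qdecreasing q (to_decreasing x), size (to_decreasing x) = size x
    & to_avoiding (to_decreasing x) = x].
Proof.
rewrite -[x]runs_of_wordK; move: (runs_of_word x) => {x} p.
rewrite avoids_ones_word_of_runs => /andP[pq psq].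
rewrite to_decreasing_runs to_avoiding_runs decreasing_runsK // size_decreasing_runs.
by rewrite qdecreasing_word_of_runs // qdec_blocks_merge.
Qed.

Lemma count_to_avoiding w : qdecreasing q w ->
  count id w = count id (to_avoiding w) + (runs_of_word w).1 %/ q.+1.
Proof.
rewrite -[w]runs_of_wordK; move: (runs_of_word w) => {w} p.
rewrite qdecreasing_word_of_runs // word_of_runsK to_avoiding_runs.
exact: count_avoiding_runs.
Qed.

End WordBijection.

Fixpoint words (n : nat) : seq (seq bool) :=
  if n is n'.+1 then [seq false :: w | w <- words n'] ++ [seq true :: w | w <- words n']
  else [:: [::]].

Lemma mem_map_cons (T : eqType) (b x : T) w s :
  (x :: w \in [seq b :: v | v <- s]) = (x == b) && (w \in s).
Proof.
by apply/mapP/andP => [[v vs [-> ->]]|[/eqP -> ws]]; [rewrite eqxx | exists w].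
Qed.

Lemma mem_words n w : (w \in words n) = (size w == n).
Proof.
elim: n w => [|n IH] [|b w] //=; rewrite mem_cat.
  by apply/norP; split; apply/mapP => -[].
by rewrite !mem_map_cons IH eqSS; case: b => /=; rewrite ?orbF.
Qed.

Lemma uniq_words n : uniq (words n).
Proof.
elim: n => [|n IH] //=; rewrite cat_uniq !map_inj_uniq ?IH //; try by move=> ? ? [].
by rewrite andbT; apply/hasPn => _ /mapP[w _ ->]; rewrite mem_map_cons.
Qed.

Lemma big_tuple_words (R : Type) (idx : R) (op : Monoid.com_law idx) n
    (P : pred (seq bool)) (F : seq bool -> R) :
  \big[op/idx]_(w : n.-tuple bool | P w) F w = \big[op/idx]_(w <- words n | P w) F w.
Proof.
rewrite -[LHS](big_map val P F); apply: perm_big; apply: uniq_perm.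
- by rewrite map_inj_uniq ?index_enum_uniq //; apply: val_inj.
- exact: uniq_words.
move=> w; rewrite mem_words; apply/mapP/eqP => [[t _ ->]|wn].
  exact: size_tuple.
by exists (Tuple (introT eqP wn)); rewrite ?mem_index_enum.
Qed.

Lemma big_pred_bij (R : Type) (idx : R) (op : Monoid.com_law idx) (T : eqType)
    (s : seq T) (A B : pred T) (f g : T -> T) (F : T -> R) :
  uniq s ->
  {in s, forall x, A x -> [/\ B (f x), f x \in s & g (f x) = x]} ->
  {in s, forall y, B y -> [/\ A (g y), g y \in s & f (g y) = y]} ->
  \big[op/idx]_(y <- s | B y) F y = \big[op/idx]_(x <- s | A x) F (f x).
Proof.
move=> s_uniq fA gB; rewrite -big_filter -[RHS]big_filter -(big_map f xpredT).
apply: perm_big; apply: uniq_perm; first exact: filter_uniq.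
  rewrite map_inj_in_uniq ?filter_uniq // => x y.
  rewrite !mem_filter => /andP[Ax xs] /andP[Ay ys] fxy.
  by case: (fA x xs Ax) => _ _ <-; case: (fA y ys Ay) => _ _ <-; rewrite fxy.
move=> y; rewrite mem_filter; apply/andP/mapP => [[By ys]|[x]].
  by case: (gB y ys By) => Agy gys fgy; exists (g y); rewrite ?mem_filter ?Agy.
by rewrite mem_filter => /andP[Ax xs] ->; case: (fA x xs Ax).
Qed.

Section KFibonacci.
Variable k : nat.

Lemma size_kfib_list n : size (kfib_list k.+1 n) = n.+1.
Proof. by elim: n => [|n IH] //=; rewrite size_rcons IH. Qed.

Lemma kfib_list_next n : kfib k.+1 n.+1 = kfib_next k.+1 (kfib_list k.+1 n).
Proof. by rewrite /kfib /= nth_rcons size_kfib_list ltnn eqxx. Qed.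

Lemma kfib_listE n : kfib_list k.+1 n = [seq kfib k.+1 i | i <- iota 0 n.+1].
Proof.
elim: n => [|n IH] //.
by rewrite -[n.+2]addn1 iotaD map_cat -IH /= add0n kfib_list_next cats1.
Qed.

Lemma kfibE n : kfib k.+1 n = kfib_next k.+1 [seq kfib k.+1 i | i <- iota 0 n].
Proof. by case: n => [|n] //; rewrite kfib_list_next kfib_listE. Qed.

Lemma kfib_small i : i < k -> kfib k.+1 i = 0.
Proof. by move=> ik; rewrite kfibE /kfib_next size_map size_iota /= ik. Qed.

Lemma kfib_base : kfib k.+1 k = 1.
Proof. by rewrite kfibE /kfib_next size_map size_iota /= ltnn eqxx. Qed.

Lemma kfib_rec m : k < m -> kfib k.+1 m = \sum_(m - k.+1 <= i < m) kfib k.+1 i.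
Proof.
move=> km; rewrite kfibE /kfib_next size_map size_iota /= ltnNge (ltnW km) /=.
by rewrite gtn_eqF // -map_drop drop_iota sumnE big_map add0n.
Qed.

Lemma kfib_double m : k <= m -> kfib k.+1 m.+1 <= 2 * kfib k.+1 m.
Proof.
move=> km; rewrite kfib_rec // big_nat_recr /=; last by rewrite subSS leq_subr.
rewrite subSS mul2n -addnn leq_add2r.
case: (ltngtP k m) km => // [km|<-] _.
  rewrite [X in _ <= X]kfib_rec // [X in _ <= X](@big_cat_nat _ _ _ (m - k)) //=.
  - exact: leq_addl.
  - by rewrite leq_sub2l.
  - exact: leq_subr.
by rewrite subnn big_nat_cond big1 // => i /andP[/andP[_ ik] _]; apply: kfib_small.
Qed.

Lemma kfib_add m : 0 < k -> k <= m.+1 ->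
  kfib k.+1 m.+1 + kfib k.+1 m <= kfib k.+1 m.+2.
Proof.
move=> k_gt0 km; rewrite [X in _ <= X]kfib_rec // !big_nat_recr /=; [|lia|lia].
by rewrite -addnA [kfib _ m + _]addnC leq_addl.
Qed.

End KFibonacci.

Section Counting.
Variable q : nat.
Hypothesis q_gt0 : 0 < q.

Lemma to_avoiding_words n :
  {in words n, forall w, qdecreasing q w ->
    [/\ avoids_ones q (to_avoiding q w), to_avoiding q w \in words n
      & to_decreasing q (to_avoiding q w) = w]}.
Proof.
move=> w; rewrite !mem_words => /eqP wn.
by case/(to_avoidingP q_gt0) => -> -> ->; rewrite wn.
Qed.

Lemma to_decreasing_words n :
  {in words n, forall x, avoids_ones q x ->
    [/\ qdecreasing q (to_decreasing q x), to_decreasing q x \in words n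
      & to_avoiding q (to_decreasing q x) = x]}.
Proof.
move=> x; rewrite !mem_words => /eqP xn.
by case/(to_decreasingP q_gt0) => -> -> ->; rewrite xn.
Qed.

Lemma u_count_v_count n : u_count q n =
  v_count q n + \sum_(w <- words n | qdecreasing q w) (runs_of_word w).1 %/ q.+1.
Proof.
rewrite /u_count /v_count !big_tuple_words.
rewrite (big_pred_bij _ _ (uniq_words n) (@to_avoiding_words n)
                      (@to_decreasing_words n)).
by rewrite -big_split; apply: eq_bigr => w; apply: count_to_avoiding.
Qed.

Lemma count_qdecreasing_words n :
  count (qdecreasing q) (words n) = count (avoids_ones q) (words n).
Proof.
rewrite -!sum1_count.
exact: (big_pred_bij _ _ (uniq_words n) (@to_decreasing_words n)
                        (@to_avoiding_words n)).
Qed.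

Definition lead_ones_sum n :=
  \sum_(w <- words n | qdecreasing q w) (runs_of_word w).1.

Lemma lead_ones_sum0 : lead_ones_sum 0 = 0.
Proof. by rewrite /lead_ones_sum big_mkcond big_seq1. Qed.

Lemma lead_ones_sumS n :
  lead_ones_sum n.+1 = lead_ones_sum n + count (qdecreasing q) (words n).
Proof.
rewrite /lead_ones_sum /= big_cat !big_map big1 //= add0n -sum1_count -big_split.
by apply: eq_big => [w|w _]; rewrite /= ?qdecreasing_true ?addn1.
Qed.

Definition count_avoiding_after k n :=
  count (fun w => avoids_ones q (nseq k true ++ w)) (words n).

Lemma count_avoiding_afterS k n : k <= q ->
  count_avoiding_after k n.+1 =
  count_avoiding_after 0 n + count_avoiding_after k.+1 n.
Proof.
move=> kq; rewrite /count_avoiding_after /= count_cat !count_map.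
congr (_ + _); apply: eq_count => w /=; last by rewrite cat_nseq_cons.
by rewrite avoids_ones_ones avoids_ones_cons /= addn0 kq.
Qed.

Lemma count_avoiding_after_full n : count_avoiding_after q.+1 n = 0.
Proof.
apply/eqP; rewrite -leqn0 -(count_pred0 (words n)) sub_count // => w.
by rewrite avoids_ones_ones ltnNge leq_addr.
Qed.

Lemma count_avoiding_after_kfib k n : k <= q.+1 ->
  count_avoiding_after k n = \sum_(n + k <= i < n + q.+1) kfib q.+1 i.
Proof.
elim: n k => [|n IH] k; rewrite leq_eqVlt => /predU1P[->|kq].
- by rewrite count_avoiding_after_full big_geq.
- rewrite ltnS in kq; rewrite /count_avoiding_after /= avoids_ones_ones /= !addn0 kq.
  rewrite !add0n big_nat_recr //= kfib_base big_nat_cond big1 // => i.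
  by move=> /andP[/andP[_ iq] _]; apply: kfib_small.
- by rewrite count_avoiding_after_full big_geq.
rewrite count_avoiding_afterS // (IH 0) // (IH k.+1) // addn0 !addSn -addnS.
rewrite [in RHS]big_nat_recr ?leq_add2l //.
by rewrite [kfib _ (n + q.+1)]kfib_rec ?leq_addl //= addnK [RHS]addnC.
Qed.

Lemma count_avoiding_kfib n :
  count (avoids_ones q) (words n) = kfib q.+1 (n + q.+1).
Proof.
rewrite -[LHS]/(count_avoiding_after 0 n) count_avoiding_after_kfib // addn0.
by rewrite [RHS]kfib_rec ?addnK // leq_addl.
Qed.

Lemma lead_ones_sum_le n : lead_ones_sum n <= kfib q.+1 (n + q.+2).
Proof.
elim: n => [|n IH]; first by rewrite lead_ones_sum0.
rewrite lead_ones_sumS count_qdecreasing_words count_avoiding_kfib.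
rewrite !addnS in IH; rewrite addSn !addnS.
by apply: leq_trans (kfib_add q_gt0 _); [rewrite leq_add2r | lia].
Qed.

Lemma v_count_le_u_count n : v_count q n <= u_count q n.
Proof. by rewrite u_count_v_count leq_addr. Qed.

Lemma u_count_le n : u_count q n <= v_count q n + 2 * kfib q.+1 (n + q.+1).
Proof.
rewrite u_count_v_count leq_add2l.
apply: (@leq_trans (lead_ones_sum n)); first by apply: leq_sum => w _; apply: leq_div.
apply: leq_trans (lead_ones_sum_le n) _.
by rewrite addnS kfib_double //; lia.
Qed.

End Counting.

Local Open Scope ring_scope.
Local Open Scope classical_set_scope.

Lemma nat_ratio_cvg0 (R : realType) (a b : nat -> nat) (c : nat) :
  (forall n, a n <= c * b n)%N ->
  (fun n => (a n)%:R / (n * b n)%:R : R) @ \oo --> 0.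
Proof.
(* For [n >= 1], [a n / (n * b n) <= c / n <= 2 * c / n.+1]. *)
move=> abc; apply: (@squeeze_cvgr _ _ _ _ (fun=> 0) (fun n => (2 * c)%:R * harmonic n)).
- exists 1%N => // n /= n_gt0; rewrite divr_ge0 //=.
  have [->|b_gt0] := posnP (b n); first by rewrite muln0 invr0 mulr0 mulr_ge0.
  rewrite ler_pdivrMr ?ltr0n ?muln_gt0 ?n_gt0 // mulrAC ler_pdivlMr // -!natrM ler_nat.
  by have := abc n; nia.
- exact: cvg_cst.
- by rewrite -(mulr0 (2 * c)%:R); apply: cvgMr; apply: cvg_harmonic.
Qed.

Theorem corollary5 (R : realType) (q : nat) (hq : (1 <= q)%N) :
  (fun n : nat =>
     ((u_count q n)%:R - (v_count q n)%:R) / (n * kfib q.+1 (n + q + 1))%:R : R)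
    @ \oo --> (0 : R).
Proof.
have -> : (fun n : nat =>
     ((u_count q n)%:R - (v_count q n)%:R) / (n * kfib q.+1 (n + q + 1))%:R : R) =
    (fun n => (u_count q n - v_count q n)%:R / (n * kfib q.+1 (n + q.+1))%:R).
  by apply: funext => n; rewrite natrB ?v_count_le_u_count // addn1 addnS.
apply: (nat_ratio_cvg0 (c := 2)) => n.
by rewrite leq_subLR; apply: u_count_le.
Qed.
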